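(* Let $G=(m,n,\boldsymbol{c},\boldsymbol{d},r_{\max},r_{\min})$ be an interbank lending game and let $\boldsymbol{s}^*$ be its pure Nash equilibrium. Then the interest rates offered by the borrowers at $\boldsymbol{s}^*$ are identical: $r_j(\boldsymbol{s}^* )=r_{j'}(\boldsymbol{s}^* )$ for all $j,j'\in B$.
   Context: An interbank lending game $G=(m,n,\boldsymbol{c},\boldsymbol{d},r_{\max},r_{\min})$ consists of positive integers $m,n$, budgets $\boldsymbol{c}\in\mathbb{R}_{>0}^m$, demands $\boldsymbol{d}\in\mathbb{R}_{>0}^n$ and reals $0<r_{\min}<r_{\max}$. The players are the lenders $L=\{1,\dots,m\}$; $B=\{1,\dots,n\}$ is the set of borrowers. Lender $i$'s strategy set is $S_i=\{s_i\in\mathbb{R}_{\ge0}^n:\sum_{j\in B}s_{ij}\le c_i\}$, the strategy space is $\boldsymbol{S}=\prod_{i\in L}S_i$ with elements $\boldsymbol{s}=(s_{ij})$. The interest rate of borrower $j$ is $r_j(\boldsymbol{s})=(r_{\min}-r_{\max})\frac{\sum_{i\in L}s_{ij}}{d_j}+r_{\max}$ and lender $i$'s utility is $u_i(\boldsymbol{s})=\sum_{j\in B}(r_j(\boldsymbol{s})-r_{\min})s_{ij}$. A pure Nash equilibrium is $\boldsymbol{s}^*\in\boldsymbol{S}$ with $u_i(\boldsymbol{s}^* )\ge u_i(s_i,\boldsymbol{s}^*_{-i})$ for all $i\in L$, $s_i\in S_i$ (such a game has exactly one pure Nash equilibrium). *)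

From mathcomp Require Import all_boot all_order all_algebra.
From mathcomp Require Import reals.
Set Implicit Arguments. Unset Strict Implicit. Unset Printing Implicit Defensive.
Import Order.TTheory GRing.Theory Num.Theory.
Local Open Scope ring_scope.

(* Lenders are 'I_m, borrowers are 'I_n; a strategy profile is
   s : 'I_m -> 'I_n -> R, with s i j the amount lender i lends to borrower j. *)

Section Game.
Variables (R : realType) (m n : nat).

Definition rate (d : 'I_n -> R) (rmax rmin : R) (s : 'I_m -> 'I_n -> R)
  (j : 'I_n) : R :=
  (rmin - rmax) * ((\sum_(i < m) s i j) / d j) + rmax.

Definition utility (d : 'I_n -> R) (rmax rmin : R) (s : 'I_m -> 'I_n -> R)
  (i : 'I_m) : R :=
  \sum_(j < n) (rate d rmax rmin s j - rmin) * s i j.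

Definition in_strategy_set (c : 'I_m -> R) (i : 'I_m) (si : 'I_n -> R) : Prop :=
  (forall j, 0 <= si j) /\ \sum_(j < n) si j <= c i.

Definition in_strategy_space (c : 'I_m -> R) (s : 'I_m -> 'I_n -> R) : Prop :=
  forall i, in_strategy_set c i (s i).

Definition deviate (s : 'I_m -> 'I_n -> R) (i : 'I_m) (si : 'I_n -> R)
  : 'I_m -> 'I_n -> R :=
  fun k => if k == i then si else s k.

Definition is_pure_NE (c : 'I_m -> R) (d : 'I_n -> R) (rmax rmin : R)
  (s : 'I_m -> 'I_n -> R) : Prop :=
  in_strategy_space c s /\
  forall (i : 'I_m) (si : 'I_n -> R), in_strategy_set c i si ->
    utility d rmax rmin (deviate s i si) i <= utility d rmax rmin s i.

End Game.

From mathcomp Require Import all_boot all_order all_algebra.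
From mathcomp Require Import reals.
From mathcomp Require Import ring lra.
Import Order.TTheory GRing.Theory Num.Theory.
Local Open Scope ring_scope.
Set Implicit Arguments. Unset Strict Implicit.

(** Write L_j for the load (total lending)/d_j of borrower j, so that
   r_j = r_max - (r_max - r_min) L_j.  Moving an amount e from borrower k to
   borrower j changes lender i's utility by
   (r_max - r_min) e ((L_k + s_ik/d_k) - (L_j + s_ij/d_j) - e (1/d_j + 1/d_k)),
   so at an equilibrium every lender with s_ik > 0 has
   L_k + s_ik/d_k <= L_j + s_ij/d_j.  If L_j < L_k this forces
   s_ik/d_k <= s_ij/d_j for every lender i, and summing over i gives
   L_k <= L_j, a contradiction. *)

Lemma le0_of_small_mulr (R : realFieldType) (x k b : R) : 0 < b ->
  (forall e, 0 < e -> e <= b -> x <= e * k) -> x <= 0.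
Proof.
move=> b_gt0 hx; rewrite leNgt; apply/negP => x_gt0.
have k1_gt0 : 0 < `|k| + 1 by rewrite ltr_wpDl.
pose e := Num.min b (x / (`|k| + 1)).
have e_gt0 : 0 < e by rewrite lt_min b_gt0 divr_gt0.
have e_le_b : e <= b by rewrite ge_min lexx.
have e_le : e <= x / (`|k| + 1) by rewrite ge_min lexx orbT.
have := hx e e_gt0 e_le_b.
have : e * k <= x / (`|k| + 1) * `|k|.
  apply: le_trans (ler_wpM2r (normr_ge0 k) e_le).
  by rewrite ler_pM2l // ler_norm.
have : x / (`|k| + 1) * `|k| < x by rewrite mulrAC ltr_pdivrMr //; nra.
lra.
Qed.

Section InterbankLending.
Variables (R : realType) (m n : nat).
Variables (c : 'I_m -> R) (d : 'I_n -> R) (rmax rmin : R).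

Definition load (s : 'I_m -> 'I_n -> R) (j : 'I_n) : R := (\sum_(i < m) s i j) / d j.

(* Lender i's marginal utility from lending to j is (rmax - rmin) (1 - marginal_load s i j). *)
Definition marginal_load (s : 'I_m -> 'I_n -> R) (i : 'I_m) (j : 'I_n) : R :=
  load s j + s i j / d j.

Definition reallocate (si : 'I_n -> R) (k j : 'I_n) (e : R) : 'I_n -> R :=
  fun l => si l + (if l == j then e else 0) - (if l == k then e else 0).

Lemma rate_subr_rmin s j : rate d rmax rmin s j - rmin = (rmax - rmin) * (1 - load s j).
Proof. by rewrite /rate -/(load s j); ring. Qed.

Lemma load_sum s j : load s j = \sum_(i < m) s i j / d j.
Proof. exact: mulr_suml. Qed.

Lemma load_deviate s i si l :
  load (deviate s i si) l = load s l + (si l - s i l) / d l.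
Proof.
rewrite /load (bigD1 i) //= [\sum_(i' < m) s i' l](bigD1 i) //= /deviate eqxx.
rewrite (eq_bigr (fun i' => s i' l)); last by move=> i' /negbTE ->.
by rewrite -mulrDl; congr (_ / _); ring.
Qed.

Lemma utility_deviate s i si :
  utility d rmax rmin (deviate s i si) i =
  (rmax - rmin) * \sum_(l < n) (1 - load s l - (si l - s i l) / d l) * si l.
Proof.
rewrite /utility mulr_sumr; apply: eq_bigr => l _.
by rewrite rate_subr_rmin load_deviate /deviate eqxx; ring.
Qed.

Lemma utility_sum s i :
  utility d rmax rmin s i = (rmax - rmin) * \sum_(l < n) (1 - load s l) * s i l.
Proof. by rewrite /utility mulr_sumr; apply: eq_bigr => l _; rewrite rate_subr_rmin mulrA. Qed.

Lemma reallocate_strategy i si k j e : in_strategy_set c i si ->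
  j != k -> 0 <= e <= si k -> in_strategy_set c i (reallocate si k j e).
Proof.
move=> [si_ge0 si_le] neq_jk /andP[e_ge0 e_le]; split=> [l|].
  have := si_ge0 l; rewrite /reallocate.
  by case: eqP => [->|_]; case: eqP => [->|_]; rewrite ?eqxx // in neq_jk *; lra.
rewrite /reallocate sumrB big_split /= -!big_mkcond /= !big_pred1_eq.
by rewrite addrK.
Qed.

Lemma utility_reallocate s i k j e : j != k ->
  utility d rmax rmin (deviate s i (reallocate (s i) k j e)) i - utility d rmax rmin s i =
  (rmax - rmin) * e *
    (marginal_load s i k - marginal_load s i j - e * ((d j)^-1 + (d k)^-1)).
Proof.
move=> neq_jk; rewrite utility_deviate utility_sum -mulrBr -sumrB.
rewrite (bigD1 j) //= (bigD1 k) 1?eq_sym //= big1 ?addr0; last first.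
  move=> l /andP[neq_lj neq_lk].
  by rewrite /reallocate (negbTE neq_lj) (negbTE neq_lk); ring.
rewrite /reallocate /marginal_load eqxx (negbTE neq_jk) eq_sym (negbTE neq_jk) eqxx.
ring.
Qed.

Hypotheses (d_gt0 : forall j, 0 < d j) (rmin_lt_rmax : rmin < rmax).

Lemma NE_marginal_load_le s i j k : is_pure_NE c d rmax rmin s ->
  0 < s i k -> marginal_load s i k <= marginal_load s i j.
Proof.
move=> [s_strat s_best] sik_gt0; have [<-|neq_jk] := eqVneq j k; first exact: lexx.
rewrite -subr_le0.
apply: (@le0_of_small_mulr R _ ((d j)^-1 + (d k)^-1) _ sik_gt0) => e e_gt0 e_le.
have e_ok : 0 <= e <= s i k by rewrite ltW.
have := s_best i _ (reallocate_strategy (s_strat i) neq_jk e_ok).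
rewrite -subr_le0 utility_reallocate // -mulrA.
by rewrite !pmulr_rle0 ?subr_gt0 // subr_le0.
Qed.

Lemma NE_share_le s i j k : is_pure_NE c d rmax rmin s ->
  load s j < load s k -> s i k / d k <= s i j / d j.
Proof.
move=> hNE lt_jk; have s_ge0 l : 0 <= s i l by have [] := hNE.1 i.
have := s_ge0 k; rewrite le_eqVlt => /predU1P[<-|sik_gt0].
  by rewrite mul0r; exact: divr_ge0 (s_ge0 j) (ltW (d_gt0 j)).
rewrite -(lerD2l (load s k)); apply: le_trans (NE_marginal_load_le j hNE sik_gt0) _.
by rewrite lerD2r ltW.
Qed.

Lemma NE_load_le s j k : is_pure_NE c d rmax rmin s -> load s k <= load s j.
Proof.
move=> hNE; rewrite leNgt; apply/negP => lt_jk.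
suff : load s k <= load s j by rewrite leNgt lt_jk.
by rewrite !load_sum; apply: ler_sum => i _; exact: NE_share_le.
Qed.

End InterbankLending.

Theorem theorem3p5 (R : realType) (m n : nat)
  (c : 'I_m -> R) (d : 'I_n -> R) (rmax rmin : R)
  (hm : (0 < m)%N) (hn : (0 < n)%N)
  (hc : forall i, 0 < c i) (hd : forall j, 0 < d j)
  (hrmin : 0 < rmin) (hr : rmin < rmax)
  (s : 'I_m -> 'I_n -> R) (hNE : is_pure_NE c d rmax rmin s) :
  forall j j' : 'I_n, rate d rmax rmin s j = rate d rmax rmin s j'.
Proof.
move=> j j'.
have eq_load : load d s j = load d s j'.
  by apply/eqP; rewrite eq_le !(NE_load_le hd hr _ _ hNE).
by rewrite /rate -!/(load d s _) eq_load.
Qed.
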